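(* If $q>487$ is a power of an odd prime, then there are pairwise distinct elements $\alpha_1,\dots,\alpha_5\in\mathbb{F}_q^*$ such that $\alpha_i+\alpha_j$ is a nonzero square in $\mathbb{F}_q$ for all $1\le i<j\le5$. *)

From HB Require Import structures.
From mathcomp Require Import all_boot all_order all_algebra all_field.
Set Implicit Arguments. Unset Strict Implicit. Unset Printing Implicit Defensive.

From HB Require Import structures.
From mathcomp Require Import all_boot all_order all_algebra all_field.
From mathcomp Require Import cyclic zify ring lra.
Import GRing.Theory Num.Theory Order.TTheory.
Set Implicit Arguments. Unset Strict Implicit.
Local Open Scope ring_scope.

(* Let chi be the quadratic character of F (q = #|F| odd).  Character-sum
   orthogonality gives sum_a chi(a+b) chi(a+b') = -1 for b <> b', hence for
   any B the sums S_a = sum_(b in B) chi(a+b) satisfy sum_a S_a^2 <= q |B|.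
   So some a in B has S_a >= -sqrt q, i.e. a + b is a nonzero square for
   roughly half of the b in B.  Starting from B = F^* and passing five times
   to such a neighbourhood yields the five elements as soon as q > 487. *)

Lemma expf_card_pred (F : finFieldType) (x : F) : x != 0 -> x ^+ #|F|.-1 = 1.
Proof.
move=> x_neq0; apply: (mulfI x_neq0); rewrite -exprS prednK ?expf_card ?mulr1 //.
exact: ltnW (finNzRing_gt1 F).
Qed.

Lemma finField_prim_root (F : finFieldType) : exists z : F, (#|F|.-1).-primitive_root z.
Proof.
have F_gt1 := finNzRing_gt1 F.
have /hasP[z _ prim_z] : has (#|F|.-1).-primitive_root (enum [pred x : F | x != 0]).
  apply: has_prim_root.
  - by rewrite -ltnS prednK // ltnW.
  - by apply/allP => x; rewrite mem_enum inE unity_rootE => /expf_card_pred ->.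
  - exact: enum_uniq.
  - by rewrite -cardE (cardC1 (0 : F)).
by exists z.
Qed.

Section QuadraticCharacter.

Variable F : finFieldType.
Hypothesis oddF : odd #|F|.

Local Notation half := (#|F|.-1)./2.

Lemma double_half_card_pred : half.*2 = #|F|.-1.
Proof.
have F_gt0 : (0 < #|F|)%N by apply: ltnW (finNzRing_gt1 F).
have : ~~ odd #|F|.-1 by rewrite -oddS prednK.
by rewrite -[RHS]odd_double_half => /negbTE ->.
Qed.

Lemma half_card_pred_gt0 : (0 < half)%N.
Proof. by rewrite -double_gt0 double_half_card_pred ltn_predRL finNzRing_gt1. Qed.

Definition euler_power (x : F) := x ^+ half.

Lemma euler_powerM x y : euler_power (x * y) = euler_power x * euler_power y.
Proof. exact: exprMn. Qed.

Lemma sqr_euler_power x : x != 0 -> euler_power x ^+ 2 = 1.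
Proof. by move=> x_neq0; rewrite -exprM muln2 double_half_card_pred expf_card_pred. Qed.

Lemma euler_power_pm1 x : x != 0 -> (euler_power x == 1) || (euler_power x == -1).
Proof. by move=> /sqr_euler_power /eqP; rewrite sqrf_eq1. Qed.

Lemma prim_root_euler_power_neq1 (z : F) :
  (#|F|.-1).-primitive_root z -> euler_power z != 1.
Proof.
move=> prim_z; rewrite /euler_power -(prim_order_dvd prim_z).
rewrite -double_half_card_pred -muln2; apply/negP => /dvdn_leq.
have := half_card_pred_gt0; lia.
Qed.

Lemma prim_root_neq0 (z : F) : (#|F|.-1).-primitive_root z -> z != 0.
Proof. by move=> prim_z; rewrite (prim_root_eq0 prim_z) -lt0n ltn_predRL finNzRing_gt1. Qed.

Lemma oppr1_neq1 : (-1 : F) != 1.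
Proof.
have [z prim_z] := finField_prim_root F.
have := euler_power_pm1 (prim_root_neq0 prim_z).
rewrite (negbTE (prim_root_euler_power_neq1 prim_z)) => /eqP <-.
exact: prim_root_euler_power_neq1.
Qed.

Lemma euler_criterion x : x != 0 -> euler_power x = 1 -> exists y, y ^+ 2 = x.
Proof.
move=> x_neq0; have [z prim_z] := finField_prim_root F.
have [i ->] := prim_rootP prim_z (expf_card_pred x_neq0).
rewrite /euler_power -exprM => /eqP.
rewrite -(prim_order_dvd prim_z) -[X in (X %| _)%N]double_half_card_pred -muln2 mulnC.
rewrite dvdn_pmul2r ?half_card_pred_gt0 // => /dvdnP[j ->].
by exists (z ^+ j); rewrite -exprM.
Qed.

Definition quadchar (x : F) : int :=
  if x == 0 then 0 else if euler_power x == 1 then 1 else -1.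

Lemma quadchar0 : quadchar 0 = 0.
Proof. by rewrite /quadchar eqxx. Qed.

Lemma quadchar1 : quadchar 1 = 1.
Proof. by rewrite /quadchar oner_eq0 /euler_power expr1n eqxx. Qed.

Lemma quadchar_eq1 x : quadchar x = 1 -> x != 0 /\ exists y, y ^+ 2 = x.
Proof.
rewrite /quadchar; have [//|x_neq0 /=] := eqVneq x 0.
by case: eqP => // euler_x _; split; last exact: euler_criterion.
Qed.

Lemma quadchar_le1 x : quadchar x <= 1.
Proof. by rewrite /quadchar; case: (x == 0); case: (euler_power x == 1). Qed.

Lemma sqr_quadchar_le1 x : quadchar x ^+ 2 <= 1.
Proof. by rewrite /quadchar; case: (x == 0); case: (euler_power x == 1). Qed.

Lemma sqr_quadchar x : x != 0 -> quadchar x ^+ 2 = 1.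
Proof. by move=> x_neq0; rewrite /quadchar (negbTE x_neq0); case: (euler_power x == 1). Qed.

Lemma quadcharM x y : quadchar (x * y) = quadchar x * quadchar y.
Proof.
rewrite /quadchar mulf_eq0.
have [->|x_neq0] := eqVneq x 0; first by rewrite /= mul0r.
have [->|y_neq0] := eqVneq y 0; first by rewrite orbT mulr0.
rewrite /= euler_powerM.
have N1_neq1 := negbTE oppr1_neq1.
by case/orP: (euler_power_pm1 x_neq0) => /eqP->;
  case/orP: (euler_power_pm1 y_neq0) => /eqP->;
  rewrite ?mulrNN ?mulr1 ?mul1r ?eqxx ?N1_neq1.
Qed.

Lemma exists_quadchar_eqN1 : exists z, quadchar z = -1.
Proof.
have [z prim_z] := finField_prim_root F; exists z.
rewrite /quadchar (negbTE (prim_root_neq0 prim_z)).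
by rewrite (negbTE (prim_root_euler_power_neq1 prim_z)).
Qed.

Lemma sum_quadchar : \sum_x quadchar x = 0.
Proof.
have [z chi_z] := exists_quadchar_eqN1.
have z_neq0 : z != 0 by apply: contra_eq_neq chi_z => ->; rewrite quadchar0.
have : \sum_x quadchar x = - \sum_x quadchar x.
  rewrite {1}(reindex_inj (mulfI z_neq0)) -mulN1r mulr_sumr /=.
  by apply: eq_bigr => x _; rewrite quadcharM chi_z.
lia.
Qed.

Lemma sum_quadchar_shift c : c != 0 -> \sum_x quadchar x * quadchar (x + c) = -1.
Proof.
move=> c_neq0; pose f x := 1 + c * x^-1.
have f_inj : injective f by move=> x y /addrI /(mulfI c_neq0) /invr_inj.
have sum_f : \sum_x quadchar (f x) = 0.
  by rewrite -[RHS]sum_quadchar [RHS](reindex_inj f_inj).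
(* Since [0^-1 = 0], the bijection [f] sends [0] to [1]. *)
move: sum_f; rewrite (bigD1 0) //= {1}/f invr0 mulr0 addr0 quadchar1 => sum_f.
rewrite (bigD1 0) //= quadchar0 mul0r add0r.
have -> : \sum_(x | x != 0) quadchar x * quadchar (x + c) = \sum_(x | x != 0) quadchar (f x).
  apply: eq_bigr => x x_neq0; rewrite -quadcharM.
  have -> : x * (x + c) = x * x * f x by rewrite /f; field.
  by rewrite !quadcharM -expr2 sqr_quadchar ?mul1r.
by apply: (addrI 1); rewrite sum_f subrr.
Qed.

Lemma sum_quadcharDD b b' : b != b' ->
  \sum_a quadchar (a + b) * quadchar (a + b') = -1.
Proof.
move=> neq_bb'; rewrite (reindex_inj (addIr (- b))) /=.
rewrite -(@sum_quadchar_shift (b' - b)) ?subr_eq0 1?eq_sym //.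
by apply: eq_bigr => a _; rewrite addrNK addrAC addrA.
Qed.

End QuadraticCharacter.

Lemma sum_indicator (T : finType) (A C : {pred T}) :
  \sum_(x in A) ((x \in C)%:R : int) = #|[predI A & C]|%:R.
Proof.
rewrite -sumr_const big_mkcondr /=; apply: eq_bigr => x _.
by case: (x \in C).
Qed.

Lemma sum_indicator1_le (T : finType) (A : {pred T}) (c : T) :
  \sum_(x in A) ((x == c)%:R : int) <= 1.
Proof.
rewrite (sum_indicator A (pred1 c)) lern1 -(card1 c).
by apply: subset_leq_card; apply/subsetP => x /andP[].
Qed.

Section SquareSumCliques.

Variable F : finFieldType.
Hypothesis oddF : odd #|F|.

Definition square_sum (x y : F) := (x != y) && (quadchar (x + y) == 1).

Lemma quadchar_corr_le (b b' : F) :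
  \sum_a quadchar (a + b) * quadchar (a + b') <= (b' == b)%:R * #|F|%:R.
Proof.
have [<-|neq_bb'] := eqVneq b b'.
  rewrite mul1r -sumr_const.
  by apply: ler_sum => a _; rewrite -expr2 sqr_quadchar_le1.
by rewrite mul0r (sum_quadcharDD oddF neq_bb').
Qed.

Lemma sum_sqr_charsum_le (B : {set F}) :
  \sum_a (\sum_(b in B) quadchar (a + b)) ^+ 2 <= (#|F| * #|B|)%:R.
Proof.
have -> : \sum_a (\sum_(b in B) quadchar (a + b)) ^+ 2 =
    \sum_(b in B) \sum_(b' in B) \sum_a quadchar (a + b) * quadchar (a + b').
  under eq_bigr do rewrite expr2 big_distrlr /=.
  by rewrite exchange_big; apply: eq_bigr => b _; rewrite exchange_big.
rewrite mulnC -sum_nat_const natr_sum; apply: ler_sum => b _.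
apply: le_trans (_ : _ <= \sum_(b' in B) (b' == b)%:R * #|F|%:R) _.
  by apply: ler_sum => b' _; exact: quadchar_corr_le.
by rewrite -mulr_suml ler_piMl ?ler0n ?sum_indicator1_le.
Qed.

Variable E : nat.
Hypothesis card_le_sqrE : (#|F| <= E * E)%N.

Lemma exists_charsum_ge (B : {set F}) : B != set0 ->
  exists2 a, a \in B & - E%:R <= \sum_(b in B) quadchar (a + b).
Proof.
move=> B_neq0; apply/exists_inP; apply: contraLR (sum_sqr_charsum_le B).
rewrite negb_exists_in -ltNge => /forall_inP charsum_lt.
have charsum_sqr_gt a : a \in B -> #|F|%:R < (\sum_(b in B) quadchar (a + b)) ^+ 2.
  move=> /charsum_lt; rewrite -ltNge; set S := \sum_(b in B) _ => S_lt.
  have : (#|F|%:R : int) <= E%:R * E%:R by rewrite -natrM ler_nat.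
  nia.
apply: lt_le_trans (_ : _ < \sum_(a in B) (\sum_(b in B) quadchar (a + b)) ^+ 2) _.
  rewrite mulnC -sum_nat_const natr_sum; apply: ltr_sum charsum_sqr_gt.
  by have [a a_in_B] := set0Pn _ B_neq0; apply/hasP; exists a; rewrite ?mem_index_enum.
rewrite [leRHS](bigID (mem B)) /= lerDl.
by apply: sumr_ge0 => a _; exact: sqr_ge0.
Qed.

Lemma exists_large_square_sum_nbhd (B : {set F}) : B != set0 ->
  exists2 a, a \in B & (#|B| <= 2 * #|[set b in B | square_sum a b]| + E + 3)%N.
Proof.
move=> B_neq0; have [a a_in_B charsum_ge] := exists_charsum_ge B_neq0.
exists a => //; set N := [set b in B | square_sum a b].
(* The exceptional terms [b = a] and [b = - a] cost at most [3] in total. *)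
have quadchar_le b : b \in B -> quadchar (a + b) <=
    2 * (b \in N)%:R - 1 + 2 * (b == a)%:R + (b == - a)%:R.
  move=> b_in_B; rewrite inE b_in_B /square_sum eq_sym /=.
  have [->|_] /= := eqVneq b a.
    by have := quadchar_le1 (a + a); case: (a == - a); lia.
  have [->|neq_b_Na] /= := eqVneq b (- a); first by rewrite subrr quadchar0.
  have : a + b != 0 by rewrite addrC addr_eq0.
  by rewrite /quadchar => /negbTE ->; case: ifP.
have := le_trans charsum_ge (ler_sum _ quadchar_le).
rewrite !big_split /= -!mulr_sumr sumr_const (sum_indicator B N).
have -> : #|[predI B & N]| = #|N| by apply: eq_card => b; rewrite !inE andb_idl // => /andP[].
rewrite -(ler_nat int) !natrD mulNrn => charsum_le.
have := sum_indicator1_le B a; have := sum_indicator1_le B (- a).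
lra.
Qed.

Fixpoint clique_bound n := if n is n'.+1 then (2 * clique_bound n' + E + 3)%N else 1%N.

Lemma exists_square_sum_clique n (B : {set F}) : (clique_bound n <= #|B|)%N ->
  exists s : seq F, [/\ size s = n.+1, {subset s <= B} & pairwise square_sum s].
Proof.
elim: n B => [|n IHn] B /= card_B.
  have [b b_in_B] : exists b, b \in B by apply/set0Pn; rewrite -card_gt0.
  by exists [:: b]; split=> // x; rewrite inE => /eqP ->.
have B_neq0 : B != set0 by rewrite -card_gt0 (leq_trans _ card_B) // addn3.
have [a a_in_B card_nbhd] := exists_large_square_sum_nbhd B_neq0.
have [|s [size_s sub_s pairwise_s]] := IHn [set b in B | square_sum a b].
  rewrite -(leq_pmul2l (isT : (0 < 2)%N)) -(leq_add2r (E + 3)) !addnA.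
  exact: leq_trans card_B card_nbhd.
exists (a :: s); split=> /=; first by rewrite size_s.
  by move=> x; rewrite inE => /predU1P[-> //|/sub_s]; rewrite inE => /andP[].
by rewrite pairwise_s andbT; apply/allP => x /sub_s; rewrite inE => /andP[].
Qed.
End SquareSumCliques.

Theorem lemma4p4 (F : finFieldType) (p k : nat) :
  prime p -> odd p -> #|F| = (p ^ k)%N -> (487 < p ^ k)%N ->
  exists a : 'I_5 -> F,
    injective a /\ (forall i, a i != 0) /\
    (forall i j : 'I_5, (i < j)%N -> a i + a j != 0 /\ exists b : F, b ^+ 2 = a i + a j).
Proof.
move=> _ odd_p card_F; rewrite -card_F => card_F_gt.
have oddF : odd #|F| by rewrite card_F oddX odd_p orbT.
(* For [q > 487], [E = q/20] satisfies [q <= E^2] and [clique_bound E 4 = 15 E + 61 < q - 1]. *)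
pose E := (#|F| %/ 20)%N.
have card_le_sqrE : (#|F| <= E * E)%N.
  have := divn_eq #|F| 20; have := ltn_pmod #|F| (isT : (0 < 20)%N); rewrite -/E; nia.
have [|s [size_s sub_s pairwise_s]] :=
  exists_square_sum_clique oddF card_le_sqrE (n := 4) (B := [set~ 0]).
  by have := leq_trunc_div #|F| 20; rewrite cardsC1 /= -/E; lia.
have uniq_s : uniq s by apply: pairwise_uniq pairwise_s => x; rewrite /square_sum eqxx.
exists (fun i => nth 0 s i); split; [|split].
- by move=> i j /eqP; rewrite nth_uniq ?size_s // => /eqP /val_inj.
- move=> i; have /sub_s : nth 0 s i \in s by rewrite mem_nth ?size_s.
  by rewrite !inE.
- move=> i j lt_ij; apply: (quadchar_eq1 oddF); apply/eqP.
  have /(pairwiseP 0) square_sum_s := pairwise_s.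
  have := square_sum_s i j; rewrite !inE size_s => /(_ (ltn_ord i) (ltn_ord j) lt_ij).
  by case/andP.
Qed.
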